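(* If $\Phi$ is the irreducible non-reduced root system of type $\mathsf{BC}_\ell$, then there is no low triple $(\lambda,\mu,\nu)$ of dominant weights of $\Phi$.
   Context: $\Phi$ of type $\mathsf{BC}_\ell$ is the union of a root system of type $\mathsf B_\ell$ (square lengths $1,2$) and one of type $\mathsf C_\ell$ (square lengths $2,4$), with basis $\Delta=\{\alpha_1,\dots,\alpha_\ell\}$ the basis of $\mathsf B_\ell$ in Bourbaki numbering, $\alpha_\ell$ being the unique simple root with $2\alpha_\ell\in\Phi$. Integral weights are those $\lambda$ with $\langle\lambda,\alpha^\vee\rangle\in\mathbb Z$ for all $\alpha\in\Phi$; the fundamental weights $\omega_1,\dots,\omega_\ell$ are dual to $\alpha_1^\vee,\dots,\alpha_{\ell-1}^\vee,(2\alpha_\ell)^\vee$ (those of $\mathsf C_\ell$); dominant weights are $\mathbb N$-combinations of them. Order: $\mu\le\lambda$ iff $\lambda-\mu$ is a nonnegative integer combination of simple roots. A triple $(\lambda,\mu,\nu)$ of dominant weights is a low triple if (i) whenever $\lambda',\mu'$ are dominant with $\lambda'\le\lambda$, $\mu'\le\mu$, $\nu\le\lambda'+\mu'$, then $\lambda'=\lambda$, $\mu'=\mu$; and (ii) $\nu+\sum_{i=1}^\ell\alpha_i\le\lambda+\mu$. *)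

From mathcomp Require Import all_boot all_order all_algebra.
Set Implicit Arguments. Unset Strict Implicit. Unset Printing Implicit Defensive.
Import Order.TTheory GRing.Theory Num.Theory.
Local Open Scope ring_scope.

Section BC.
Variable l : nat.

Definition vec := 'rV[rat]_l.

(* standard basis vector e_k (k counted from 0) *)
Definition e (k : nat) : vec := \row_(j < l) ((j == k :> nat)%:R).

Definition dot (u v : vec) : rat := \sum_(k < l) u 0 k * v 0 k.

Definition isRoot (v : vec) : Prop :=
  exists i j : 'I_l,
    v = e i \/ v = - e i \/ v = 2%:R *: e i \/ v = - (2%:R *: e i) \/
    (i != j /\ (v = e i + e j \/ v = e i - e j \/ v = - e i - e j)).

Definition coroot (a : vec) : vec := (2%:R / dot a a) *: a.

Definition pairing (x a : vec) : rat := dot x (coroot a).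

Definition isInt (x : rat) : Prop := exists z : int, x = z%:~R.

Definition integral_weight (x : vec) : Prop :=
  forall a, isRoot a -> isInt (pairing x a).

(* simple roots (Bourbaki numbering, shifted to start at 0):
   alpha_i = e_i - e_{i+1} for i < l-1, alpha_{l-1} = e_{l-1} *)
Definition simple_root (i : 'I_l) : vec :=
  if (i.+1 < l)%N then e i - e i.+1 else e i.

Definition simple_root_C (i : 'I_l) : vec :=
  if (i.+1 < l)%N then simple_root i else 2%:R *: simple_root i.

Definition is_fundamental (i : 'I_l) (w : vec) : Prop :=
  forall j : 'I_l, pairing w (simple_root_C j) = (i == j)%:R.

Definition dominant (x : vec) : Prop :=
  exists (w : 'I_l -> vec) (c : 'I_l -> nat),
    integral_weight x /\ (forall i, is_fundamental i (w i)) /\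
    x = \sum_(i < l) (c i)%:R *: w i.

Definition wle (mu la : vec) : Prop :=
  exists c : 'I_l -> nat, la - mu = \sum_(i < l) (c i)%:R *: simple_root i.

Definition low_triple (la mu nu : vec) : Prop :=
  (forall la' mu' : vec, dominant la' -> dominant mu' ->
     wle la' la -> wle mu' mu -> wle nu (la' + mu') ->
     la' = la /\ mu' = mu) /\
  wle (nu + \sum_(i < l) simple_root i) (la + mu).

End BC.

From mathcomp Require Import all_boot all_order all_algebra.
From mathcomp Require Import ring lra.
Set Implicit Arguments. Unset Strict Implicit. Unset Printing Implicit Defensive.
Import Order.TTheory GRing.Theory Num.Theory.
Local Open Scope ring_scope.

(* Write x_m := (x, e_m). The simple roots telescope, alpha_i + ... + alpha_(l-1)
   = e_i, so the sum of all simple roots is e_0 and lambda - e_j <= lambda for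
   every j. Pairing with the simple coroots of C_l gives the differences
   x_m - x_(m+1) (and x_(l-1)), so a dominant weight has x_0 >= ... >= x_(l-1) >= 0.
   If lambda <> 0 is dominant, some fundamental weight omega_(j+1) occurs in it
   and lambda - e_j is again dominant; as e_0 - e_j is a sum of simple roots,
   nu + e_0 <= lambda + mu gives nu <= (lambda - e_j) + mu, so condition (i)
   forbids lambda <> 0, and symmetrically mu <> 0. But lambda = mu = 0
   contradicts (ii), because nu_0 >= 0. *)

Section BCWeights.
Variable l : nat.
Implicit Types (u v w x y : vec l).

Lemma dotC u v : dot u v = dot v u.
Proof. by apply: eq_bigr => i _; rewrite mulrC. Qed.

Lemma dotDl u v w : dot (u + v) w = dot u w + dot v w.
Proof. by rewrite /dot -big_split; apply: eq_bigr => i _; rewrite !mxE mulrDl. Qed.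

Lemma dotNl u w : dot (- u) w = - dot u w.
Proof. by rewrite /dot -sumrN; apply: eq_bigr => i _; rewrite !mxE mulNr. Qed.

Lemma dotZl (a : rat) u w : dot (a *: u) w = a * dot u w.
Proof. by rewrite /dot mulr_sumr; apply: eq_bigr => i _; rewrite !mxE mulrA. Qed.

Lemma dot0l w : dot 0 w = 0.
Proof. by rewrite /dot big1 // => i _; rewrite mxE mul0r. Qed.

Lemma dotBl u v w : dot (u - v) w = dot u w - dot v w.
Proof. by rewrite dotDl dotNl. Qed.

Lemma dotDr u v w : dot w (u + v) = dot w u + dot w v.
Proof. by rewrite !(dotC w) dotDl. Qed.

Lemma dotNr u w : dot w (- u) = - dot w u.
Proof. by rewrite !(dotC w) dotNl. Qed.

Lemma dotZr a u w : dot w (a *: u) = a * dot w u.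
Proof. by rewrite !(dotC w) dotZl. Qed.

Lemma dotBr u v w : dot w (u - v) = dot w u - dot w v.
Proof. by rewrite dotDr dotNr. Qed.

Lemma dot_suml (c : 'I_l -> rat) (f : 'I_l -> vec l) a :
  dot (\sum_(i < l) c i *: f i) a = \sum_(i < l) c i * dot (f i) a.
Proof.
rewrite /dot; under eq_bigr do rewrite summxE mulr_suml.
rewrite exchange_big; apply: eq_bigr => i _.
by rewrite mulr_sumr; apply: eq_bigr => k _; rewrite !mxE mulrA.
Qed.

Lemma sum_mul_delta (f : 'I_l -> rat) (k : 'I_l) :
  \sum_(i < l) f i * (i == k :> nat)%:R = f k.
Proof.
rewrite (bigD1 k) //= eqxx mulr1 big1 ?addr0 // => i /negbTE Hik.
by rewrite [_ == _ :> nat]Hik mulr0.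
Qed.

Lemma e_ge m : (l <= m)%N -> e l m = 0.
Proof.
move=> Hm; apply/rowP => k; rewrite !mxE.
by rewrite (_ : (k == m :> nat) = false) //; apply/negbTE; rewrite neq_ltn (leq_trans (ltn_ord k)).
Qed.

Lemma dot_ee m n : dot (e l m) (e l n) = ((m == n) && (m < l)%N)%:R.
Proof.
case: (ltnP m l) => [Hm | Hm]; last by rewrite e_ge // dot0l andbF.
rewrite andbT /dot -(sum_mul_delta (fun i : 'I_l => (i == n :> nat)%:R) (Ordinal Hm)).
by apply: eq_bigr => i _; rewrite !mxE mulrC.
Qed.

Lemma dot_e u (k : 'I_l) : dot u (e l k) = u 0 k.
Proof.
by rewrite /dot -(sum_mul_delta (u 0) k); apply: eq_bigr => i _; rewrite mxE.
Qed.

Lemma simple_rootE (i : 'I_l) : simple_root i = e l i - e l i.+1.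
Proof.
rewrite /simple_root; case: ifP => // Hi.
by rewrite (e_ge (m := i.+1)) ?subr0 // leqNgt Hi.
Qed.

Lemma pairing_simple_root_C u (k : 'I_l) :
  pairing u (simple_root_C k) = dot u (e l k) - dot u (e l k.+1).
Proof.
rewrite /pairing /coroot /simple_root_C /simple_root.
have Hkk : (k == k.+1 :> nat) = false by rewrite eqn_leq ltnn andbF.
have Hkk' : (k.+1 == k :> nat) = false by rewrite eqn_leq ltnn.
case Hk: (k.+1 < l)%N.
  rewrite !dotBl !dotBr !dot_ee eqxx ltn_ord Hk Hkk Hkk' /= eqxx.
  by rewrite (_ : (2 / (1 - 0 - (0 - 1)) : rat) = 1) // scale1r dotBr.
rewrite (e_ge (m := k.+1)); last by rewrite leqNgt Hk.
rewrite scalerA !dotZl !dotZr dot_ee eqxx ltn_ord.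
by rewrite (_ : (2 / (2 * (2 * 1)) * 2 : rat) = 1) // mul1r (dotC u 0) dot0l subr0.
Qed.

Lemma coord_desc_ind (P : nat -> Prop) :
  (forall m, (l <= m)%N -> P m) -> (forall m, (m < l)%N -> P m.+1 -> P m) ->
  forall m, P m.
Proof.
move=> Pge Pstep m; move: {2}(l - m)%N (erefl (l - m)%N) => n.
elim: n m => [|n IH] m Hn; first by apply: Pge; rewrite -subn_eq0 Hn.
by apply: Pstep; [rewrite -subn_gt0 Hn | apply: IH; rewrite subnS Hn].
Qed.

Lemma coord_ge0_of_pairing_ge0 u :
  (forall k : 'I_l, 0 <= pairing u (simple_root_C k)) -> forall m, 0 <= dot u (e l m).
Proof.
move=> Hu; apply: coord_desc_ind => [m Hm | m Hm IH]; first by rewrite e_ge // dotC dot0l.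
by have := Hu (Ordinal Hm); rewrite pairing_simple_root_C subr_ge0; apply: le_trans.
Qed.

Lemma eq0_of_pairing_eq0 u :
  (forall k : 'I_l, pairing u (simple_root_C k) = 0) -> u = 0.
Proof.
move=> Hu; have Hcoord : forall m, dot u (e l m) = 0.
  apply: coord_desc_ind => [m Hm | m Hm IH]; first by rewrite e_ge // dotC dot0l.
  by have := Hu (Ordinal Hm); rewrite pairing_simple_root_C IH subr0.
by apply/rowP => k; rewrite -dot_e Hcoord mxE.
Qed.

Lemma isInt_den1 (r : rat) : denq r = 1 -> isInt r.
Proof. by move=> Hr; exists (numq r); rewrite -[LHS]divq_num_den Hr divr1. Qed.

Lemma isIntB (r s : rat) : isInt r -> isInt s -> isInt (r - s).
Proof. by move=> [a ->] [b ->]; exists (a - b); rewrite rmorphB. Qed.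

Lemma integral_weightB x y :
  integral_weight x -> integral_weight y -> integral_weight (x - y).
Proof. by move=> Hx Hy a Ha; rewrite /pairing dotBl; apply: isIntB; [apply: Hx | apply: Hy]. Qed.

Lemma e_integral (j : 'I_l) : integral_weight (e l j).
Proof.
have Eord (a : 'I_l) n : dot (e l a) (e l n) = (a == n :> nat)%:R.
  by rewrite dot_ee ltn_ord andbT.
move=> r [i [i' Hr]]; rewrite /pairing /coroot.
case: Hr => [->|[->|[->|[->|[Hii' [->|[->|->]]]]]]];
  rewrite !(dotDl, dotDr, dotNl, dotNr, dotZl, dotZr) !Eord ?eqxx;
  try (have Hii'n : (i == i' :> nat) = false by exact: negbTE Hii');
  try (have Hi'in : (i' == i :> nat) = false by rewrite eq_sym; exact: negbTE Hii');
  rewrite ?Hii'n ?Hi'in;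
  case: (j == i :> nat); try case: (j == i' :> nat); by apply: isInt_den1.
Qed.

Lemma pairing_sum_fundamental (c : 'I_l -> nat) (f : 'I_l -> vec l) k :
  (forall i, is_fundamental i (f i)) ->
  pairing (\sum_(i < l) (c i)%:R *: f i) (simple_root_C k) = (c k)%:R.
Proof.
move=> Hf; rewrite /pairing dot_suml -(sum_mul_delta (fun i => (c i)%:R) k).
by apply: eq_bigr => i _; have := Hf i k; rewrite /pairing => ->.
Qed.

Lemma dominant_of_pairing (f : 'I_l -> vec l) x (n : 'I_l -> nat) :
  (forall i, is_fundamental i (f i)) -> integral_weight x ->
  (forall k, pairing x (simple_root_C k) = (n k)%:R) -> dominant x.
Proof.
move=> Hf Hx Hn; exists f, n; split => //; split => //.
apply/eqP; rewrite -subr_eq0; apply/eqP; apply: eq0_of_pairing_eq0 => k.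
by rewrite /pairing dotBl -!/(pairing _ _) Hn pairing_sum_fundamental // subrr.
Qed.

Lemma dominant_coord_ge0 x : dominant x -> forall m, 0 <= dot x (e l m).
Proof.
move=> [f [c [_ [Hf ->]]]]; apply: coord_ge0_of_pairing_ge0 => k.
by rewrite pairing_sum_fundamental.
Qed.

(* If omega_(j+1) occurs in x, subtracting e_j lowers the coefficient of
   omega_(j+1) by one and raises that of omega_j by one. *)
Lemma dominant_sub_e x : dominant x -> x <> 0 -> exists j : 'I_l, dominant (x - e l j).
Proof.
move=> [f [c [Hint [Hf Hx]]]] Hx0.
have [j Hj | Hc0] := pickP (fun j => c j != 0%N); last first.
  by case: Hx0; rewrite Hx big1 // => i _; move/negbFE/eqP: (Hc0 i) => ->; rewrite scale0r.
exists j; apply: (dominant_of_pairing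
  (n := fun k => (c k - (j == k :> nat) + (j == k.+1 :> nat))%N) Hf).
  exact/integral_weightB/e_integral.
move=> k; rewrite /pairing dotBl -!/(pairing _ _) Hx pairing_sum_fundamental //.
rewrite pairing_simple_root_C !dot_ee ltn_ord !andbT.
case Hjk: (j == k :> nat); last by rewrite subn0 natrD /=; move: (_ == _) => b; ring.
have <- : j = k by apply/val_inj/eqP.
by rewrite natrD natrB ?lt0n //=; move: (_ == _) => b; ring.
Qed.

Lemma sum_simple_root_ge j : \sum_(i < l | (j <= i)%N) simple_root i = e l j.
Proof.
move: j; apply: coord_desc_ind => [j Hj | j Hj IH].
  rewrite e_ge // big_pred0 // => i.
  by apply/negbTE; rewrite -ltnNge (leq_trans (ltn_ord i)).
rewrite (bigD1 (Ordinal Hj)) //= (eq_bigl (fun i : 'I_l => (j < i)%N)).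
  by rewrite IH simple_rootE subrK.
by move=> i; rewrite ltn_neqAle andbC eq_sym.
Qed.

Lemma sum_simple_root : \sum_(i < l) simple_root i = e l 0.
Proof. by rewrite -(sum_simple_root_ge 0); apply: eq_bigl. Qed.

Lemma wle_refl x : wle x x.
Proof. by exists (fun _ => 0%N); rewrite subrr big1 // => i _; rewrite scale0r. Qed.

Lemma wle_add_sum (P : pred 'I_l) x y :
  wle y x -> wle y (x + \sum_(i < l | P i) simple_root i).
Proof.
move=> [c Hc]; exists (fun i => (c i + P i)%N).
rewrite addrAC Hc [\sum_(i < l | P i) _]big_mkcond -big_split /=; apply: eq_bigr => i _.
by rewrite natrD scalerDl; case: (P i); rewrite ?scale1r ?scale0r.
Qed.

Lemma wle_sub_e x (j : 'I_l) : wle (x - e l j) x.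
Proof.
rewrite -{2}(subrK (e l j) x) -(sum_simple_root_ge j).
exact/wle_add_sum/wle_refl.
Qed.

Lemma wle_subr x y z : wle (y + z) x -> wle y (x - z).
Proof. by move=> [c Hc]; exists c; rewrite -Hc opprD addrA addrAC. Qed.

(* e_0 - e_j = alpha_0 + ... + alpha_(j-1). *)
Lemma wle_sub_e_of_wle_add_sum_simple x y (j : 'I_l) :
  wle (y + \sum_(i < l) simple_root i) x -> wle y (x - e l j).
Proof.
rewrite (bigID (fun i : 'I_l => (j <= i)%N)) /= sum_simple_root_ge.
move/wle_subr/(wle_add_sum (fun i : 'I_l => ~~ (j <= i)%N)).
by rewrite opprD addrA subrK.
Qed.

Lemma not_wle_add_sum_simple_0 y : (0 < l)%N -> dominant y ->
  ~ wle (y + \sum_(i < l) simple_root i) 0.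
Proof.
move=> Hl Hy [c /(congr1 (fun v => dot v (e l 0)))].
rewrite dot_suml sum_simple_root sub0r dotNl dotDl dot_ee eqxx Hl /=.
have Hsum : 0 <= \sum_(i < l) (c i)%:R * dot (simple_root i) (e l 0).
  apply: sumr_ge0 => i _; apply: mulr_ge0 => //.
  by rewrite simple_rootE dotBl !dot_ee /= subr0 ler0n.
move=> Heq; have := dominant_coord_ge0 Hy 0.
by move: Hsum; rewrite -Heq; lra.
Qed.

Lemma sub_e_neq x (j : 'I_l) : x - e l j <> x.
Proof. by move/(congr1 (fun v : vec l => v 0 j)); rewrite !mxE eqxx /=; lra. Qed.

End BCWeights.

Theorem mainTheorem5 (l : nat) (hl : (1 <= l)%N) (la mu nu : vec l) :
  dominant la -> dominant mu -> dominant nu -> ~ low_triple la mu nu.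
Proof.
move=> Dla Dmu Dnu [Hlow Hle].
have [Hla0 | /eqP Hla] := eqVneq la 0; last first.
  have [j Dj] := dominant_sub_e Dla Hla.
  have Hnu : wle nu (la - e l j + mu).
    by rewrite addrAC; exact: wle_sub_e_of_wle_add_sum_simple.
  have [Hla' _] := Hlow _ _ Dj Dmu (wle_sub_e la j) (wle_refl mu) Hnu.
  exact: sub_e_neq Hla'.
have [Hmu0 | /eqP Hmu] := eqVneq mu 0; last first.
  have [j Dj] := dominant_sub_e Dmu Hmu.
  have Hnu : wle nu (la + (mu - e l j)).
    by rewrite addrA; exact: wle_sub_e_of_wle_add_sum_simple.
  have [_ Hmu'] := Hlow _ _ Dla Dj (wle_refl la) (wle_sub_e mu j) Hnu.
  exact: sub_e_neq Hmu'.
by move: Hle; rewrite Hla0 Hmu0 addr0; exact: not_wle_add_sum_simple_0.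
Qed.
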